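(* Let $\psi\in\mathcal L$ be in XNF, let $C$ be a set of atoms with $\mathit{foa}(\psi)\subseteq C$, and let $\mathsf{decomp}(\psi,C)=\{(\mathsf{prm}_1,\mathsf{sub}_1),\dots,(\mathsf{prm}_k,\mathsf{sub}_k)\}$. If $A$ is a set of atoms such that $A\models\mathsf{prm}_i$ for some $1\le i\le k$, then $\psi^+(A)=\mathsf{rmX}(\mathsf{sub}_i)$.
   Context: Syntax. Atoms are predicate applications $p(t_1,\dots,t_k)$ over terms that may contain data variables and lookback variables. First-order formulas are $\phi::=\top\mid\bot\mid a\mid\neg a\mid\phi\wedge\phi\mid\phi\vee\phi$. Properties are $\psi::=\phi\mid\psi\wedge\psi\mid\psi\vee\psi\mid\mathsf X\psi\mid\mathsf X_{\mathsf w}\psi\mid\psi\mathsf U\psi\mid\psi\mathsf R\psi$, forming $\mathcal L$; $\mathit{foa}(\psi)$ is the set of atoms of $\psi$. $\mathit{last}$ is a dedicated proposition. Normal forms. - $\mathsf{tnps}(\psi)=\{\psi\}$ if $\psi$ is a (negated) atom or rooted by a temporal operator, and $\mathsf{tnps}(\psi_1\wedge\psi_2)=\mathsf{tnps}(\psi_1\vee\psi_2)=\mathsf{tnps}(\psi_1)\cup\mathsf{tnps}(\psi_2)$. - $\psi$ is in XNF if $\mathsf{tnps}(\psi)$ contains only (negated) atoms and properties rooted by $\mathsf X$ or $\mathsf X_{\mathsf w}$. - $\mathsf{rmX}$: $\mathsf{rmX}(\bot)=\bot$, $\mathsf{rmX}(\top)=\top$, $\mathsf{rmX}(\mathit{last})=\bot$,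 $\mathsf{rmX}(\neg\mathit{last})=\top$, $\mathsf{rmX}(\mathsf X\psi)=\psi\wedge\neg\mathit{last}$, $\mathsf{rmX}(\mathsf X_{\mathsf w}\psi)=\psi\vee\mathit{last}$, and $\mathsf{rmX}$ commutes with $\wedge$ and $\vee$. Progression. For a set of atoms $A$: - an atom $a$ maps to $\top$ if $a\in A$, else $\bot$; $\neg a$ maps to $\bot$ if $a\in A$, else $\top$; - $^+$ commutes with $\wedge$ and $\vee$; - $(\mathsf X\psi_1)^+(A)=\psi_1\wedge\neg\mathit{last}$, and $(\mathsf X_{\mathsf w}\psi_1)^+(A)=\psi_1\vee\mathit{last}$; - $(\psi_1\mathsf U\psi_2)^+(A)=\psi_2^+(A)\vee(\psi_1^+(A)\wedge(\mathsf X(\psi_1\mathsf U\psi_2))^+(A))$; - $(\psi_1\mathsf R\psi_2)^+(A)=\psi_2^+(A)\wedge(\psi_1^+(A)\vee(\mathsf X_{\mathsf w}(\psi_1\mathsf R\psi_2))^+(A))$. Decomposition. $\equiv$ is propositional equivalence, treating atoms, $\mathit{last}$ and subproperties rooted by temporal operators as opaque propositions. For a property $\psi$ in XNF and a set of atoms $C$, $\mathsf{decomp}(\psi,C)=\{(\mathsf{prm}_1,\mathsf{sub}_1),\dots,(\mathsf{prm}_k,\mathsf{sub}_k)\}$, $k\ge1$, is a set of pairs of properties with: 1. $\psi\equiv\bigvee_i(\mathsf{prm}_i\wedge\mathsf{sub}_i)$; 2. each $\mathsf{prm}_i$ has no temporal operators and only atoms from $C$, and $\mathsf{tnps}(\mathsf{sub}_i)\cap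 C=\emptyset$; 3. $\mathsf{prm}_i\wedge\mathsf{prm}_j\equiv\bot$ for $i\ne j$; 4. $\bigvee_i\mathsf{prm}_i\equiv\top$; 5. $\mathsf{sub}_i\neq\mathsf{sub}_j$ for $i\ne j$. $A\models\mathsf{prm}_i$ means propositional satisfaction with the atoms in $A$ true and all others false. *)

From mathcomp Require Import all_boot.
Set Implicit Arguments. Unset Strict Implicit. Unset Printing Implicit Defensive.

Section Syntax.
Variable Atom : Type.

(* Properties of L, extended with the dedicated proposition [last] and its
   negation (which arise from progression / rmX).  First-order formulas
   (T, F, a, ~a, /\, \/) are the temporal-operator-free properties. *)
Inductive prop : Type :=
| PTrue | PFalse
| PAtom of Atom | PNAtom of Atom
| PLast | PNLast
| PAnd of prop & prop | POr of prop & prop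
| PX of prop | PXw of prop
| PU of prop & prop | PR of prop & prop.

Fixpoint inL (p : prop) : bool :=
  match p with
  | PLast | PNLast => false
  | PAnd p q | POr p q | PU p q | PR p q => inL p && inL q
  | PX p | PXw p => inL p
  | _ => true
  end.

Fixpoint foa (p : prop) : seq Atom :=
  match p with
  | PAtom a | PNAtom a => [:: a]
  | PAnd p q | POr p q | PU p q | PR p q => foa p ++ foa q
  | PX p | PXw p => foa p
  | _ => [::]
  end.

Fixpoint tnps (p : prop) : seq prop :=
  match p with
  | PAnd p q | POr p q => tnps p ++ tnps q
  | PTrue | PFalse => [::]
  | _ => [:: p]
  end.

Definition XNF (p : prop) : bool :=
  all (fun q => match q with PAtom _ | PNAtom _ | PX _ | PXw _ => true
                             | _ => false end) (tnps p).

Fixpoint rmX (p : prop) : option prop :=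
  match p with
  | PFalse => Some PFalse
  | PTrue => Some PTrue
  | PLast => Some PFalse
  | PNLast => Some PTrue
  | PX q => Some (PAnd q PNLast)
  | PXw q => Some (POr q PLast)
  | PAnd p q => match rmX p, rmX q with
                | Some p', Some q' => Some (PAnd p' q') | _, _ => None end
  | POr p q => match rmX p, rmX q with
                | Some p', Some q' => Some (POr p' q') | _, _ => None end
  | _ => None
  end.

(* progression psi^+(A); a set of atoms is given by its characteristic
   function.  (The clauses for [last]/[~last] are not specified in the paper
   and are irrelevant for properties of L.) *)
Fixpoint prog (A : Atom -> bool) (p : prop) : prop :=
  match p with
  | PTrue => PTrue
  | PFalse => PFalse
  | PAtom a => if A a then PTrue else PFalse
  | PNAtom a => if A a then PFalse else PTrue
  | PLast => PLast
  | PNLast => PNLast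
  | PAnd p q => PAnd (prog A p) (prog A q)
  | POr p q => POr (prog A p) (prog A q)
  | PX q => PAnd q PNLast
  | PXw q => POr q PLast
  | PU p q => POr (prog A q) (PAnd (prog A p) (PAnd (PU p q) PNLast))
  | PR p q => PAnd (prog A q) (POr (prog A p) (POr (PR p q) PLast))
  end.

(* propositional evaluation: atoms, last and temporal-rooted subproperties are
   opaque propositions whose truth value is given by v *)
Fixpoint eval (v : prop -> bool) (p : prop) : bool :=
  match p with
  | PTrue => true
  | PFalse => false
  | PNAtom a => ~~ v (PAtom a)
  | PNLast => ~~ v PLast
  | PAnd p q => eval v p && eval v q
  | POr p q => eval v p || eval v q
  | _ => v p
  end.

Definition pequiv (p q : prop) : Prop := forall v, eval v p = eval v q.

Definition psat (A : Atom -> bool) (p : prop) : bool :=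
  eval (fun q => match q with PAtom a => A a | _ => false end) p.

Fixpoint noTemporal (p : prop) : bool :=
  match p with
  | PX _ | PXw _ | PU _ _ | PR _ _ => false
  | PAnd p q | POr p q => noTemporal p && noTemporal q
  | _ => true
  end.

Definition bigOr (s : seq prop) : prop := foldr POr PFalse s.

Definition prmD (D : seq (prop * prop)) (i : nat) : prop := (nth (PTrue, PTrue) D i).1.
Definition subD (D : seq (prop * prop)) (i : nat) : prop := (nth (PTrue, PTrue) D i).2.

Definition is_decomp (C : Atom -> bool) (psi : prop) (D : seq (prop * prop)) : Prop :=
  0 < size D /\
  [/\ pequiv psi (bigOr [seq PAnd d.1 d.2 | d <- D]),
      (forall i, i < size D ->
         [&& noTemporal (prmD D i), all C (foa (prmD D i)) &
             all (fun q => match q with PAtom a | PNAtom a => ~~ C a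
                                   | _ => true end) (tnps (subD D i))]),
      (forall i j, i < size D -> j < size D -> i <> j ->
         pequiv (PAnd (prmD D i) (prmD D j)) PFalse),
      pequiv (bigOr [seq d.1 | d <- D]) PTrue &
      (forall i j, i < size D -> j < size D -> i <> j -> subD D i <> subD D j)].

End Syntax.

(* Fix a valuation v and evaluate psi under the valuation w that reads atoms
   from A, makes last false and gives each X/Xw-rooted subproperty the value
   under v of its rmX-unfolding.  For psi in XNF, w(psi) = v(psi^+(A)), and
   w(sub_i) = v(rmX(sub_i)).  As w agrees with A on atoms, it satisfies prm_i
   and, by disjointness, no other premise, so the decomposition identity
   collapses to w(psi) = w(sub_i). *)
From mathcomp Require Import all_boot.

Set Implicit Arguments.
Unset Strict Implicit.

Section Evaluation.
Variable Atom : Type.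
Implicit Types (w : prop Atom -> bool) (p r : prop Atom).

Lemma eval_bigOr w (s : seq (prop Atom)) : eval w (bigOr s) = has (eval w) s.
Proof. by elim: s => //= p s ->. Qed.

Lemma eq_eval_noTemporal w1 w2 p :
  (forall a, w1 (PAtom a) = w2 (PAtom a)) -> w1 (@PLast Atom) = w2 (@PLast Atom) ->
  noTemporal p -> eval w1 p = eval w2 p.
Proof.
move=> eq_atom eq_last; elim: p => //=.
- by move=> a _; rewrite eq_atom.
- by rewrite eq_last.
- by move=> p IHp q IHq /andP [/IHp -> /IHq ->].
- by move=> p IHp q IHq /andP [/IHp -> /IHq ->].
Qed.

Lemma eval_decomp_branch (C : Atom -> bool) psi D i w :
  is_decomp C psi D -> i < size D -> eval w (prmD D i) ->
  eval w psi = eval w (subD D i).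
Proof.
move=> [_ [eq_psi _ disj_prm _ _]] ltiD prm_i.
rewrite eq_psi eval_bigOr has_map.
apply/(has_nthP (@PTrue Atom, @PTrue Atom))/idP => [[j ltjD] | sub_i].
- move=> branch_j; have /andP [prm_j sub_j] :
    eval w (prmD D j) && eval w (subD D j) := branch_j.
  have [-> // | neq_ij] := eqVneq i j.
  have disj : eval w (prmD D i) && eval w (prmD D j) = false :=
    disj_prm i j ltiD ltjD (elimN eqP neq_ij) w.
  by rewrite prm_i prm_j in disj.
- by exists i => //; apply/andP.
Qed.

Variables (A : Atom -> bool) (v : prop Atom -> bool).

Definition unfold_val p : bool :=
  match p with
  | PAtom a => A a
  | PLast => false
  | PX q => eval v q && ~~ v (@PLast Atom)
  | PXw q => eval v q || v (@PLast Atom)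
  | _ => v p
  end.

Lemma eval_prog_XNF p : XNF p -> eval v (prog A p) = eval unfold_val p.
Proof.
rewrite /XNF; elim: p => //=.
- by move=> a _; case: (A a).
- by move=> a _; case: (A a).
- by move=> p IHp q IHq; rewrite all_cat => /andP [/IHp -> /IHq ->].
- by move=> p IHp q IHq; rewrite all_cat => /andP [/IHp -> /IHq ->].
Qed.

Lemma eval_rmX p r : rmX p = Some r -> eval v r = eval unfold_val p.
Proof.
elim: p r => [||a|a|||p IHp q IHq|p IHp q IHq|p _|p _|p _ q _|p _ q _] r //=.
1-4, 7-8: by move=> [<-].
all: case E1: (rmX p) => [p'|] //; case E2: (rmX q) => [q'|] // [<-] /=.
all: by rewrite (IHp _ E1) (IHq _ E2).
Qed.

Lemma eval_unfold_val_noTemporal p : noTemporal p -> eval unfold_val p = psat A p.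
Proof. exact: eq_eval_noTemporal. Qed.

End Evaluation.

Theorem lemma6 (Atom : Type) (psi : prop Atom) (C A : Atom -> bool)
    (D : seq (prop Atom * prop Atom)) (i : nat) (r : prop Atom) :
  inL psi -> XNF psi -> all C (foa psi) -> is_decomp C psi D ->
  i < size D -> psat A (prmD D i) ->
  rmX (subD D i) = Some r ->
  pequiv (prog A psi) r.
Proof.
move=> _ xnf_psi _ dec ltiD sat_prm rmX_sub v.
have [_ [_ prm_wf _ _ _]] := dec.
have prm_i : eval (unfold_val A v) (prmD D i).
  by case/and3P: (prm_wf i ltiD) => noT _ _; rewrite eval_unfold_val_noTemporal.
by rewrite eval_prog_XNF // (eval_rmX A v rmX_sub) (eval_decomp_branch dec ltiD prm_i).
Qed.
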